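(* In the setting described in the context, with $\mathbf{C}\in\mathbb{R}^{n\times n}$ defined entrywise by $$[\mathbf C]_{ij}=\begin{cases}\frac{1}{2n_{s(i)}}\Big(\frac{a_i}{w_i}-\frac{1-a_i}{1-w_i}\Big)&\text{if }j=i,\\[4pt] \frac{1}{2n_{s(i)}}\Big[\Big(1-\frac{a_i}{w_i}\Big)[\boldsymbol\beta_1^{r(i)}(x_i)]_j+\Big(\frac{1-a_i}{1-w_i}-1\Big)[\boldsymbol\beta_0^{r(i)}(x_i)]_j\Big]&\text{if }j\ne i,\end{cases}$$ the MMD test statistic satisfies $T_n^{\mathrm{MMD}}:=n\|\bar\psi_n\|_{\mathcal{H}}^2=n\langle\mathbf C,\mathbf K\mathbf C\mathbf L\rangle_F$.
   Context: Let $k,\ell$ be kernels on $\mathcal{X},\mathcal{Y}$ with feature maps $K_x,L_y$, and $\mathcal{H}=\mathcal{H}_\mathcal{X}\otimes\mathcal{H}_\mathcal{Y}$ the tensor-product RKHS with kernel $k(x,x')\ell(y,y')$ and feature map $\Lambda_{x,y}=K_x\otimes L_y$. Data $z_i=(x_i,a_i,y_i)\in\mathcal{X}\times\{0,1\}\times\mathcal{Y}$, $i\in[n]$. $[n]$ is partitioned into folds $\mathcal{I}^1,\mathcal{I}^2$ of sizes $n_1,n_2$; for index $i$, $s(i)$ is the fold containing $i$ and $r(i)=3-s(i)$. For each $r\in\{1,2\}$ (fitted on fold $r$) there are propensity estimates $\pi_n^r:\mathcal{X}\to(0,1)$ and outcome models $\theta^r_{n,a}(x)=\sum_{j=1}^n[\boldsymbol\beta_a^r(x)]_j\Lambda_{x,y_j}$,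 $a\in\{0,1\}$, with coefficient vectors $\boldsymbol\beta^r_a(x)\in\mathbb{R}^n$ satisfying $[\boldsymbol\beta^r_a(x)]_j=0$ whenever $j\notin\mathcal{I}^r$ or $a_j\neq a$. Write $w_i=\pi_n^{r(i)}(x_i)$. The cross-fitted one-step estimator is $\bar\psi_n=\frac12\sum_{r=1}^2\frac1{n_s}\sum_{i\in\mathcal{I}^s}\Big[\Big(\frac{a_i}{\pi^r_n(x_i)}-\frac{1-a_i}{1-\pi^r_n(x_i)}\Big)\big(\Lambda_{x_i,y_i}-\theta^r_{n,a_i}(x_i)\big)+\theta^r_{n,1}(x_i)-\theta^r_{n,0}(x_i)\Big]$ with $s=3-r$ (this equals $\frac12\sum_r(\psi^r_n+\mathbb{E}_{P_n^s}\phi_n^r)$ for the efficient influence function $\phi^r_n$, since the plug-in terms cancel). $\mathbf K,\mathbf L\in\mathbb{R}^{n\times n}$ are Gram matrices $[\mathbf K]_{ij}=k(x_i,x_j)$, $[\mathbf L]_{ij}=\ell(y_i,y_j)$, and $\langle\mathbf A,\mathbf B\rangle_F=\mathrm{tr}(\mathbf A^\top\mathbf B)$. *)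

From HB Require Import structures.
From mathcomp Require Import all_boot all_order all_algebra.
Set Implicit Arguments. Unset Strict Implicit. Unset Printing Implicit Defensive.
Import Order.TTheory GRing.Theory Num.Theory.
Local Open Scope ring_scope.

Definition inner_product (R : realFieldType) (V : lmodType R)
  (ip : V -> V -> R) : Prop :=
  [/\ (forall u v, ip u v = ip v u),
      (forall (c : R) u v w, ip (c *: u + v) w = c * ip u w + ip v w),
      (forall u, 0 <= ip u u) &
      (forall u, ip u u = 0 -> u = 0)].

Definition ind (R : realFieldType) (b : bool) : R := (b : nat)%:R.

(* Size n_f of fold f (folds are indexed by bool: false ~ fold 1, true ~ fold 2). *)
Definition nfold (n : nat) (fold : 'I_n -> bool) (f : bool) : nat :=
  #|[set i : 'I_n | fold i == f]|.

Definition theta (R : realFieldType) (V : lmodType R) (X Y : Type) (n : nat)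
  (Lam : X -> Y -> V) (y : 'I_n -> Y)
  (beta : bool -> bool -> X -> 'I_n -> R) (r a : bool) (x : X) : V :=
  \sum_(j < n) beta r a x j *: Lam x (y j).

(* Cross-fitted one-step estimator psi_bar_n; model fold r, evaluation fold s = ~~ r. *)
Definition psi_bar (R : realFieldType) (V : lmodType R) (X Y : Type) (n : nat)
  (Lam : X -> Y -> V) (x : 'I_n -> X) (a : 'I_n -> bool) (y : 'I_n -> Y)
  (fold : 'I_n -> bool) (pi : bool -> X -> R)
  (beta : bool -> bool -> X -> 'I_n -> R) : V :=
  2^-1 *: \sum_(r : bool)
    ((nfold fold (~~ r))%:R^-1 *:
      \sum_(i < n | fold i == ~~ r)
        ((ind R (a i) / pi r (x i) - (1 - ind R (a i)) / (1 - pi r (x i))) *: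
           (Lam (x i) (y i) - theta Lam y beta r (a i) (x i))
         + theta Lam y beta r true (x i) - theta Lam y beta r false (x i))).

(* The matrix C of the proposition; s(i) = fold i, r(i) = ~~ fold i,
   w_i = pi^{r(i)}(x_i). *)
Definition Cmat (R : realFieldType) (X : Type) (n : nat)
  (x : 'I_n -> X) (a : 'I_n -> bool) (fold : 'I_n -> bool)
  (pi : bool -> X -> R) (beta : bool -> bool -> X -> 'I_n -> R) : 'M[R]_n :=
  \matrix_(i, j)
    (let w := pi (~~ fold i) (x i) in
     let ai := ind R (a i) in
     let c := (2 * (nfold fold (fold i))%:R)^-1 in
     if j == i then c * (ai / w - (1 - ai) / (1 - w))
     else c * ((1 - ai / w) * beta (~~ fold i) true (x i) j
               + ((1 - ai) / (1 - w) - 1) * beta (~~ fold i) false (x i) j)).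

Definition gram (R : realFieldType) (Z : Type) (n : nat) (k : Z -> Z -> R)
  (z : 'I_n -> Z) : 'M[R]_n := \matrix_(i, j) k (z i) (z j).

Definition frob (R : realFieldType) (n : nat) (A B : 'M[R]_n) : R :=
  \tr (A^T *m B).

(* Every summand of the cross-fitted estimator is a linear combination of the
   features Lambda_{x_i, y_j} of the observed pairs: the residual
   Lambda_{x_i, y_i} - theta_{a_i}(x_i) and the plug-in difference
   theta_1(x_i) - theta_0(x_i) only involve the y_j, and row i of C collects
   the coefficients (the diagonal gets no contribution from beta, since
   beta^{r(i)} vanishes on the fold of i).  Hence psi_bar = sum_{i,j} C_ij
   Lambda_{x_i, y_j}, and bilinearity together with
   <Lambda_{x,y}, Lambda_{x',y'}> = k(x,x') l(y,y') turns its squared norm into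
   sum C_ij C_i'j' K_ii' L_jj' = <C, K C L>_F, using the symmetry of L. *)
From HB Require Import structures.
From mathcomp Require Import all_boot all_order all_algebra ring.
Import Order.TTheory GRing.Theory Num.Theory.
Local Open Scope ring_scope.

Section InnerProduct.
Variables (R : realFieldType) (V : lmodType R) (ip : V -> V -> R).
Hypothesis ip_ok : inner_product ip.

Lemma ipC u v : ip u v = ip v u.
Proof. by case: ip_ok. Qed.

Lemma ip0l w : ip 0 w = 0.
Proof.
case: ip_ok => _ ip_lin _ _; have := ip_lin 1 0 0 w.
rewrite scale1r addr0 mul1r => ip00.
by apply: (@addrI _ (ip 0 w)); rewrite addr0 -ip00.
Qed.

Lemma ipDl u v w : ip (u + v) w = ip u w + ip v w.
Proof. by case: ip_ok => _ ip_lin _ _; rewrite -{1}[u]scale1r ip_lin mul1r. Qed.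

Lemma ipZl c u w : ip (c *: u) w = c * ip u w.
Proof. by case: ip_ok => _ ip_lin _ _; rewrite -[c *: u]addr0 ip_lin ip0l addr0. Qed.

Lemma ip_suml (I : Type) (r : seq I) (P : pred I) (F : I -> V) w :
  ip (\sum_(i <- r | P i) F i) w = \sum_(i <- r | P i) ip (F i) w.
Proof. by elim/big_rec2: _ => [|i s t _ <-]; [exact: ip0l | exact: ipDl]. Qed.

Lemma ip_double_sum m p (C D : 'M[R]_(m, p)) (v : 'I_m -> 'I_p -> V) :
  ip (\sum_i \sum_j C i j *: v i j) (\sum_i' \sum_j' D i' j' *: v i' j') =
  \sum_i \sum_j \sum_i' \sum_j' C i j * D i' j' * ip (v i j) (v i' j').
Proof.
rewrite ip_suml; apply: eq_bigr => i _; rewrite ip_suml; apply: eq_bigr => j _.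
rewrite ipZl ipC ip_suml mulr_sumr; apply: eq_bigr => i' _.
rewrite ip_suml mulr_sumr; apply: eq_bigr => j' _.
by rewrite ipZl ipC mulrA.
Qed.

End InnerProduct.

Lemma gram_tr (R : realFieldType) (Z : Type) n (l : Z -> Z -> R) (z : 'I_n -> Z) :
  (forall u v, l u v = l v u) -> (gram l z)^T = gram l z.
Proof. by move=> l_sym; apply/matrixP => i j; rewrite !mxE l_sym. Qed.

Lemma frob_mulmx_sym (R : realFieldType) n (C K L : 'M[R]_n) : L^T = L ->
  frob C (K *m C *m L) =
  \sum_i \sum_j \sum_i' \sum_j' C i j * C i' j' * (K i i' * L j j').
Proof.
move=> L_sym; rewrite /frob /mxtrace.
under eq_bigr => j _ do rewrite mxE.
rewrite exchange_big; apply: eq_bigr => i _; apply: eq_bigr => j _.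
rewrite !mxE mulr_sumr.
under eq_bigr => j' _ do rewrite mxE mulr_suml mulr_sumr.
rewrite exchange_big; apply: eq_bigr => i' _; apply: eq_bigr => j' _.
have -> : L j' j = L j j' by rewrite -[in LHS]L_sym mxE.
ring.
Qed.

Lemma big_cross_fit (V : nmodType) (I : finType) (fold : I -> bool)
  (F : bool -> I -> V) :
  \sum_(r : bool) \sum_(i | fold i == ~~ r) F r i = \sum_i F (~~ fold i) i.
Proof.
under eq_bigr => r _ do rewrite big_mkcond.
rewrite exchange_big; apply: eq_bigr => i _.
by rewrite big_bool; case: (fold i); rewrite /= ?addr0 ?add0r.
Qed.

Lemma one_step_term_expand (R : realFieldType) (V : lmodType R) n
  (v : 'I_n -> V) (i : 'I_n) (c d : R) (b b1 b0 : 'I_n -> R) :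
  c *: (d *: (v i - \sum_j b j *: v j) + \sum_j b1 j *: v j - \sum_j b0 j *: v j)
  = \sum_j (c * (d * ((j == i)%:R - b j) + b1 j - b0 j)) *: v j.
Proof.
have -> : v i = \sum_j (j == i)%:R *: v j.
  rewrite (bigD1 i) //= eqxx scale1r big1 ?addr0 // => j /negbTE ->.
  by rewrite scale0r.
rewrite -sumrB scaler_sumr -big_split -sumrB scaler_sumr.
apply: eq_bigr => j _.
by rewrite -scalerBl scalerA /= -scalerDl -scalerBl scalerA.
Qed.

Section EstimatorCoefficients.
Variables (R : realFieldType) (X Y : Type) (n : nat).
Variables (x : 'I_n -> X) (a : 'I_n -> bool) (fold : 'I_n -> bool).
Variables (pi : bool -> X -> R) (beta : bool -> bool -> X -> 'I_n -> R).
Hypothesis beta_fold : forall r a0 x0 j,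
  (fold j != r) || (a j != a0) -> beta r a0 x0 j = 0.

Definition aipw_weight (r : bool) (i : 'I_n) : R :=
  ind R (a i) / pi r (x i) - (1 - ind R (a i)) / (1 - pi r (x i)).

Lemma CmatE i j :
  Cmat x a fold pi beta i j =
  2^-1 * (nfold fold (fold i))%:R^-1 *
    (aipw_weight (~~ fold i) i * ((j == i)%:R - beta (~~ fold i) (a i) (x i) j)
     + beta (~~ fold i) true (x i) j - beta (~~ fold i) false (x i) j).
Proof.
have beta_i a0 x0 : beta (~~ fold i) a0 x0 i = 0.
  by apply: beta_fold; case: (fold i).
rewrite mxE /aipw_weight invfM.
case: eqP => [->|_]; rewrite ?beta_i; case: (a i); rewrite /ind /=; ring.
Qed.

Lemma psi_bar_expand (H : lmodType R) (Lam : X -> Y -> H) (y : 'I_n -> Y) :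
  psi_bar Lam x a y fold pi beta =
  \sum_i \sum_j Cmat x a fold pi beta i j *: Lam (x i) (y j).
Proof.
rewrite /psi_bar scaler_sumr.
under eq_bigr => r _ do rewrite scalerA scaler_sumr.
rewrite big_cross_fit; apply: eq_bigr => i _.
rewrite -scalerA -/(aipw_weight _ i) /theta.
rewrite (one_step_term_expand _ _ _ (fun j => Lam (x i) (y j))) scaler_sumr.
apply: eq_bigr => j _.
by rewrite scalerA negbK CmatE mulrA.
Qed.

End EstimatorCoefficients.

Theorem proposition3p5 (R : realFieldType) (X Y : Type)
  (HX HY H : lmodType R)
  (ipX : HX -> HX -> R) (ipY : HY -> HY -> R) (ip : H -> H -> R)
  (ipX_ok : inner_product ipX) (ipY_ok : inner_product ipY)
  (ip_ok : inner_product ip)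
  (k : X -> X -> R) (l : Y -> Y -> R)
  (Kf : X -> HX) (Lf : Y -> HY) (Lam : X -> Y -> H)
  (hk : forall x x', k x x' = ipX (Kf x) (Kf x'))
  (hl : forall y y', l y y' = ipY (Lf y) (Lf y'))
  (hLam : forall x y x' y', ip (Lam x y) (Lam x' y') = k x x' * l y y')
  (n : nat) (x : 'I_n -> X) (a : 'I_n -> bool) (y : 'I_n -> Y)
  (fold : 'I_n -> bool)
  (pi : bool -> X -> R) (hpi : forall r x0, 0 < pi r x0 < 1)
  (beta : bool -> bool -> X -> 'I_n -> R)
  (hbeta : forall r a0 x0 j, (fold j != r) || (a j != a0) -> beta r a0 x0 j = 0) :
  let psi := psi_bar Lam x a y fold pi beta in
  let C := Cmat x a fold pi beta in
  n%:R * ip psi psi = n%:R * frob C (gram k x *m C *m gram l y).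
Proof.
move=> psi C; congr (_ * _).
have l_sym u v : l u v = l v u by rewrite !hl ipC.
rewrite /psi psi_bar_expand // ip_double_sum // frob_mulmx_sym ?gram_tr //.
do 4 (apply: eq_bigr => ? _).
by rewrite hLam !mxE.
Qed.
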